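(* Let $\gamma_1,\gamma_2>0$ and consider the birth-death chain RDS $(\theta,\varphi)$ on $\mathbb{N}_0$ described in the context. Let $d\in\mathbb{Z}\setminus\{0\}$ and $I_d:=\{(x,y)\in\mathbb{N}_0^2 : x-y=d\}$. Then for every $(x_0,y_0)\in I_d$, \[ \mathbb{P}\big((\varphi^n_q(x_0),\varphi^n_q(y_0))\in I_d \ \text{for all } n\geq 0\big)=0, \] i.e. the two-point motion $(\varphi^n_q(x_0),\varphi^n_q(y_0))_{n\in\mathbb{N}_0}$ leaves $I_d$ almost surely.
   Context: Noise space: $\mathcal{Q}_+=\{q=(q_n)_{n\in\mathbb{N}_0}: q_n\in[0,1]\}$ with the product Borel $\sigma$-algebra and the product measure $\mathbb{P}=\lambda^{\mathbb{N}_0}$, $\lambda$ Lebesgue measure on $[0,1]$; shift $\theta(q_0,q_1,\dots)=(q_1,q_2,\dots)$. For $q\in\mathcal{Q}_+$ define $f_q:\mathbb{N}_0\to\mathbb{N}_0$ by $f_q(x)=x+1$ if $q_0<\frac{\gamma_1}{\gamma_1+\gamma_2x}$ and $f_q(x)=x-1$ otherwise (the embedded Markov chain of the birth-death reaction network $\emptyset\to\mathcal{S}$ at rate $\gamma_1$, $\mathcal{S}\to\emptyset$ at rate $\gamma_2x$). The cocycle is $\varphi^0_q(x)=x$ and $\varphi^n_q(x)=f_{\theta^{n-1}q}\circ\cdots\circ f_q(x)$ for $n\geq1$. The pair $(\varphi^n_q(x_0),\varphi^n_q(y_0))_n$ with the same $q$ is called the two-point motion. *)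

From mathcomp Require Import all_boot all_order all_algebra.
From mathcomp Require Import all_classical all_reals all_analysis.
Set Implicit Arguments. Unset Strict Implicit. Unset Printing Implicit Defensive.
Import Order.TTheory GRing.Theory Num.Theory.
Local Open Scope classical_set_scope.
Local Open Scope ring_scope.

Definition bd_step (R : realType) (g1 g2 : R) (u : R) (x : nat) : nat :=
  if u < g1 / (g1 + g2 * x%:R) then x.+1 else x.-1.

(* Cocycle: phi^0_q(x) = x, phi^{n+1}_q(x) = f_{theta^n q}(phi^n_q(x)),
   and f_{theta^n q} only looks at the coordinate q_n. *)
Fixpoint bd_cocycle (R : realType) (g1 g2 : R) (q : nat -> R) (n : nat)
    (x : nat) : nat :=
  match n with
  | 0 => x
  | n'.+1 => bd_step g1 g2 (q n') (bd_cocycle g1 g2 q n' x)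
  end.

Definition I_d (d : int) : set (nat * nat) :=
  [set xy | (xy.1%:Z - xy.2%:Z = d)%R].

Definition unit_interval (R : realType) : set R := `[(0:R), 1]%classic.

(* Equivalently, the law of (U_n)_n on R^N is the product measure
   lambda^{N_0} of the noise space Q_+. *)
Definition iid_uniform01 (d : measure_display) (T : measurableType d)
    (R : realType) (P : probability T R) (U : nat -> T -> R) : Prop :=
  (forall i, measurable_fun setT (U i)) /\
  (forall (n : nat) (A : nat -> set R), (forall i, measurable (A i)) ->
     P (\bigcap_(i in `I_n) (U i @^-1` A i)) =
     (\prod_(i < n) (lebesgue_measure (A i `&` @unit_interval R)))%E).

(* If the two points stay at distance D = |d| forever, they must jump in the
   same direction at every step.  With p(j) = g1 / (g1 + g2 j) the birth
   probability and y the lower point, a joint up-jump has probability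
   p(y + D) and a joint down-jump probability 1 - p(y).  As p(y + D) <= p(y + 1),
   for beta slightly above 1 the weight beta^y is a strict supermartingale of
   this sub-stochastic walk:
     p(y + D) beta^(y+1) + (1 - p(y)) beta^(y-1) <= rho beta^y  with rho < 1.
   Each of the 2^n jump patterns of length n is a rectangle event in
   U_0, ..., U_(n-1) whose probability is at most the product of its step
   weights, so the probability of staying coupled for n steps is at most
   rho^n beta^y, which tends to 0. *)

From mathcomp Require Import all_boot all_order all_algebra.
From mathcomp Require Import all_classical all_reals all_analysis.
From mathcomp Require Import lra zify.
Import Order.TTheory GRing.Theory Num.Theory numFieldNormedType.Exports.
Local Open Scope classical_set_scope.
Local Open Scope ring_scope.

Lemma lee_prod (R : realDomainType) (I : Type) (s : seq I) (P : pred I)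
    (f g : I -> \bar R) :
  (forall i, P i -> 0 <= f i)%E -> (forall i, P i -> f i <= g i)%E ->
  (\prod_(i <- s | P i) f i <= \prod_(i <- s | P i) g i)%E.
Proof.
move=> f_ge0 fg; suff : (0 <= \prod_(i <- s | P i) f i <= \prod_(i <- s | P i) g i)%E.
  by case/andP.
apply: (big_ind2 (fun a b => 0 <= a <= b)%E); first by rewrite lee01 lexx.
  move=> a1 a2 b1 b2 /andP[a1_ge0 a12] /andP[b1_ge0 b12].
  by rewrite mule_ge0 // lee_pmul.
by move=> i Pi; rewrite f_ge0 ?fg.
Qed.

Lemma geometric_domination_eq0 (R : realType) (x : \bar R) (rho C : R) :
  (0 <= x)%E -> 0 <= rho < 1 -> (forall n, x <= (rho ^+ n * C)%:E)%E -> x = 0%E.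
Proof.
move=> x_ge0 /andP[rho_ge0 rho_lt1] x_le; apply/eqP; rewrite eq_le x_ge0 andbT.
have rhoC_cvg : (fun n => rho ^+ n * C) @ \oo --> 0.
  by rewrite -(mul0r C); apply: cvgMr_tmp; apply: cvg_expr; rewrite ger0_norm.
case: x x_ge0 x_le => [r _ r_le | _ /(_ 0%N) // | //].
have r_le_lim : r <= limn ((fun n => rho ^+ n * C) : R^nat).
  by apply: limr_ge; [apply/cvg_ex; exists 0 | apply: nearW => n; rewrite -lee_fin].
by rewrite lee_fin (le_trans r_le_lim) // (cvg_lim _ rhoC_cvg).
Qed.

Lemma measure_sub_sum_seq {d} {T : measurableType d} {R : realType}
    (mu : {measure set T -> \bar R}) {X : eqType} (x0 : X) (l : seq X)
    (F : X -> set T) (A : set T) :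
  (forall x, measurable (F x)) -> measurable A ->
  A `<=` [set w | exists2 x, x \in l & F x w] ->
  (mu A <= \sum_(x <- l) mu (F x))%E.
Proof.
move=> mF mA sub; rewrite (big_nth x0) big_mkord.
apply: (@content_subadditive _ _ _ mu A (fun k => F (nth x0 l k))) => // w /sub[x xl Fxw].
rewrite -(bigcup_mkord _ (fun k => F (nth x0 l k))).
by exists (index x l); rewrite /= ?index_mem ?nth_index.
Qed.

Lemma lebesgue_ray_lt_unit_le (R : realType) (a : R) : 0 <= a ->
  (lebesgue_measure (`]-oo, a[ `&` @unit_interval R) <= a%:E)%E.
Proof.
move=> a_ge0; apply: (@le_trans _ _ (lebesgue_measure [set` `[0, a]])).
  apply: le_measure; rewrite ?inE.
  - by apply: measurableI; exact: measurable_itv.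
  - exact: measurable_itv.
  - by move=> x [] /=; rewrite /unit_interval /= !in_itv /= => /ltW -> /andP[->].
by rewrite lebesgue_measure_itv /= lte_fin sube0; case: ltgtP a_ge0 => // <-.
Qed.

Lemma lebesgue_ray_ge_unit_le (R : realType) (b : R) : b <= 1 ->
  (lebesgue_measure (`[b, +oo[ `&` @unit_interval R) <= (1 - b)%:E)%E.
Proof.
move=> b_le1; apply: (@le_trans _ _ (lebesgue_measure [set` `[b, 1]])).
  apply: le_measure; rewrite ?inE.
  - by apply: measurableI; exact: measurable_itv.
  - exact: measurable_itv.
  - by move=> x [] /=; rewrite /unit_interval /= !in_itv /= andbT => -> /andP[_ ->].
by rewrite lebesgue_measure_itv /= lte_fin; case: ifP; rewrite ?lee_fin ?subr_ge0.
Qed.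

Definition walk_end (m : nat) (s : bitseq) : nat :=
  foldl (fun y (up : bool) => if up then y.+1 else y.-1) m s.

Lemma walk_end_rcons m s (up : bool) :
  walk_end m (rcons s up) = if up then (walk_end m s).+1 else (walk_end m s).-1.
Proof. exact: foldl_rcons. Qed.

Fixpoint bitseqs (n : nat) : seq bitseq :=
  if n is n'.+1 then
    [seq rcons s true | s <- bitseqs n'] ++ [seq rcons s false | s <- bitseqs n']
  else [:: [::]].

Lemma mem_bitseqs n s : size s = n -> s \in bitseqs n.
Proof.
elim: n s => [|n IHn] s; first by case: s.
case/lastP: s => [//|s b]; rewrite size_rcons => -[/IHn s_in] /=.
by rewrite mem_cat; case: b; rewrite (map_f _ s_in) ?orbT.
Qed.

Section LyapunovBound.
Context {R : realFieldType} (p : nat -> R) (D : nat).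

Definition step_weight (y : nat) (up : bool) : R :=
  if up then p (y + D) else 1 - p y.

Definition path_weight (m : nat) (s : bitseq) : R :=
  \prod_(i < size s) step_weight (walk_end m (take i s)) (nth false s i).

Lemma path_weight_rcons m s up :
  path_weight m (rcons s up) = path_weight m s * step_weight (walk_end m s) up.
Proof.
rewrite /path_weight size_rcons big_ord_recr /= nth_rcons ltnn eqxx.
rewrite -cats1 take_size_cat //; congr (_ * _); apply: eq_bigr => i _.
by rewrite nth_cat takel_cat ?ltn_ord // ltnW.
Qed.

Hypothesis p_itv : forall y, 0 <= p y <= 1.

Lemma path_weight_ge0 m s : 0 <= path_weight m s.
Proof.
apply: prodr_ge0 => i _; rewrite /step_weight.
set y := walk_end m (take i s); have /andP[p_ge0 p_le1] := p_itv y.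
by case: nth; rewrite ?subr_ge0 //; have /andP[] := p_itv (y + D).
Qed.

Variables beta rho : R.
Hypotheses (beta_ge1 : 1 <= beta) (rho_ge0 : 0 <= rho).
(* Gives the truncated down-step [0.-1 = 0] the weight [1 - p 0 = 0]. *)
Hypothesis p0 : p 0 = 1.
Hypothesis drift : forall y, p (y + D) * beta ^+ 2 + (1 - p y) <= rho * beta.

Lemma step_drift y :
  step_weight y true * beta ^+ y.+1 + step_weight y false * beta ^+ y.-1
  <= rho * beta ^+ y.
Proof.
have beta_gt0 : 0 < beta by apply: lt_le_trans beta_ge1.
have := drift y; rewrite /step_weight; case: y => [|y].
  by rewrite p0 subrr !mul0r !addr0 expr0 mulr1 expr2 mulrA ler_pM2r.
move=> /(ler_wpM2r (exprn_ge0 y (ltW beta_gt0))).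
by rewrite mulrDl !exprS expr0 mulr1 -!mulrA.
Qed.

Lemma weighted_paths_le m n :
  \sum_(s <- bitseqs n) path_weight m s * beta ^+ walk_end m s <= rho ^+ n * beta ^+ m.
Proof.
elim: n => [|n IHn] /=; first by rewrite big_seq1 /path_weight big_ord0 !mul1r.
rewrite big_cat !big_map /= -big_split exprS -mulrA.
apply: le_trans (ler_wpM2l rho_ge0 IHn); rewrite mulr_sumr; apply: ler_sum => s _ /=.
rewrite !path_weight_rcons !walk_end_rcons -!mulrA -mulrDr mulrCA.
by rewrite ler_wpM2l ?path_weight_ge0 ?step_drift.
Qed.

Lemma paths_weight_le m n : \sum_(s <- bitseqs n) path_weight m s <= rho ^+ n * beta ^+ m.
Proof.
apply: le_trans (weighted_paths_le m n); apply: ler_sum => s _ /=.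
by rewrite ler_peMr ?path_weight_ge0 ?exprn_ege1.
Qed.

End LyapunovBound.

Lemma drift_ineq (R : realFieldType) (t e u v : R) :
  0 < e <= 1 -> 5 * e <= t -> 1 <= u -> u + t <= v ->
  v^-1 * (1 + e) ^+ 2 + (1 - u^-1) <= 1 + e / 2.
Proof.
move=> /andP[e_gt0 e_le1] te u_ge1 uv.
have u_gt0 : 0 < u by lra.
have v_gt0 : 0 < v by lra.
suff : (1 + e) ^+ 2 <= (u^-1 + e / 2) * v by rewrite -ler_pdivrMr // mulrC; lra.
have am_gm : 3 * e * u <= t + e * u ^+ 2 / 2.
  by have := mulr_ge0 (ltW e_gt0) (sqr_ge0 (u - 3)); lra.
have e2 : e ^+ 2 <= e by rewrite expr2; nra.
apply: (@le_trans _ _ ((u^-1 + e / 2) * (u + t))); last first.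
  by rewrite ler_wpM2l ?lerD2l // addr_ge0 // ?invr_ge0 ?divr_ge0 ?ltW.
have uV : u * u^-1 = 1 by rewrite mulfV ?gt_eqF.
rewrite -(ler_pM2l u_gt0) [leRHS]mulrA (mulrDr u) uV.
have t_gt0 : 0 < t by lra.
have := mulr_ge0 (mulr_ge0 (ltW e_gt0) (ltW u_gt0)) (ltW t_gt0); nra.
Qed.

Section BirthDeathChain.
Context {R : realType} (g1 g2 : R).
Hypotheses (g1_gt0 : 0 < g1) (g2_gt0 : 0 < g2).

Definition birth_prob (x : nat) : R := g1 / (g1 + g2 * x%:R).

Lemma birth_probE x : birth_prob x = (1 + g2 / g1 * x%:R)^-1.
Proof.
by rewrite /birth_prob -invf_div mulrDl divff ?lt0r_neq0 // mulrAC.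
Qed.

Lemma birth_prob0 : birth_prob 0 = 1.
Proof. by rewrite /birth_prob mulr0 addr0 divff ?lt0r_neq0. Qed.

Lemma birth_prob_itv x : 0 < birth_prob x <= 1.
Proof.
have u_ge1 : 1 <= 1 + g2 / g1 * x%:R by rewrite lerDl mulr_ge0 // divr_ge0 // ltW.
have u_gt0 := lt_le_trans ltr01 u_ge1.
by rewrite birth_probE invr_gt0 invf_le1 ?u_gt0.
Qed.

Lemma coupled_step D u y :
  bd_step g1 g2 u (y + D) = (bd_step g1 g2 u y + D)%N ->
  if u < birth_prob (y + D) then bd_step g1 g2 u y = y.+1
  else birth_prob y <= u /\ bd_step g1 g2 u y = y.-1.
Proof.
rewrite /bd_step -!/(birth_prob _).
by case: ltP => _; case: ltP => //= _; lia.
Qed.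

Lemma birth_prob_drift D : (0 < D)%N -> exists beta rho : R,
  [/\ 1 <= beta, 0 <= rho, rho < 1 &
      forall y, birth_prob (y + D) * beta ^+ 2 + (1 - birth_prob y) <= rho * beta].
Proof.
move=> D_gt0; set t := g2 / g1; set e := t / (5 + t).
have t_gt0 : 0 < t by rewrite divr_gt0.
have e_gt0 : 0 < e by rewrite divr_gt0 //; lra.
have e_le1 : e <= 1 by rewrite ler_pdivrMr; lra.
have te : 5 * e <= t by rewrite mulrA ler_pdivrMr; nra.
have beta_gt0 : 0 < 1 + e by lra.
exists (1 + e), ((1 + e / 2) / (1 + e)); split => [||| y]; first lra.
- by rewrite divr_ge0 //; lra.
- by rewrite ltr_pdivrMr; lra.
rewrite divfK ?lt0r_neq0 // !birth_probE -/t.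
apply: (@drift_ineq _ t); rewrite ?e_gt0 //.
- by have := mulr_ge0 (ltW t_gt0) (ler0n R y); lra.
- by rewrite natrD mulrDr -[t in _ + t]mulr1 addrA lerD2l ler_pM2l // ler1n.
Qed.

Context {dsp : measure_display} {T : measurableType dsp}.
Variables (P : probability T R) (U : nat -> T -> R).
Hypothesis U_iid : iid_uniform01 P U.

Local Notation orbit w := (bd_cocycle g1 g2 (fun k => U k w)).

Lemma measurable_U_preimage i (B : set R) : measurable B -> measurable (U i @^-1` B).
Proof. by move=> mB; rewrite -[_ @^-1` _]setTI; apply: U_iid.1. Qed.

Lemma measurable_const_set (Q : Prop) : measurable [set _ : T | Q].
Proof.
have [q|nq] := pselect Q.
  by rewrite (_ : [set _ | Q] = setT) //; apply/seteqP; split.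
by rewrite (_ : [set _ | Q] = set0) //; apply/seteqP; split.
Qed.

Lemma measurable_step_eq i x y : measurable [set w | bd_step g1 g2 (U i w) x = y].
Proof.
rewrite (_ : [set w | _] =
    (U i @^-1` `]-oo, birth_prob x[ `&` [set _ | x.+1 = y]) `|`
    (U i @^-1` `[birth_prob x, +oo[ `&` [set _ | x.-1 = y])).
  by apply: measurableU; apply: measurableI; first [exact: measurable_const_set |
    apply: measurable_U_preimage; exact: measurable_itv].
apply/seteqP; split => w /=; rewrite /bd_step -/(birth_prob _) !in_itv /= ?andbT.
  by case: ltP => u_lt ->; [left | right].
by case=> -[u_lt <-]; rewrite ?u_lt // ltNge u_lt.
Qed.

Lemma measurable_orbit_eq n x y : measurable [set w | orbit w n x = y].
Proof.
elim: n y => [|n IHn] y; first exact: (measurable_const_set (x = y)).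
rewrite (_ : [set w | _] = \bigcup_(z in setT)
    ([set w | orbit w n x = z] `&` [set w | bd_step g1 g2 (U n w) z = y])).
  apply: bigcup_measurable => z _.
  by apply: measurableI; [exact: IHn | exact: measurable_step_eq].
apply/seteqP; split => w /=; first by exists (orbit w n x).
by case=> z _ [<-].
Qed.

Variable D : nat.

Definition coupled (y : nat) : set T :=
  [set w | forall n, orbit w n (y + D) = (orbit w n y + D)%N].

Lemma measurable_coupled y : measurable (coupled y).
Proof.
rewrite (_ : coupled y = \bigcap_n \bigcup_(z in setT)
    ([set w | orbit w n y = z] `&` [set w | orbit w n (y + D) = (z + D)%N])).
  apply: bigcapT_measurable => n; apply: bigcup_measurable => z _.
  by apply: measurableI; apply: measurable_orbit_eq.
apply/seteqP; split => w /=.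
  by move=> Cw n _; exists (orbit w n y) => //; split; last exact: Cw.
by move=> Cw n; have [z _ [-> ->]] := Cw n I.
Qed.

(* The pattern is read off the upper point y + D: it goes up iff [U_i < p (y + D)]. *)
Definition jump_set (y : nat) (up : bool) : set R :=
  if up then `]-oo, birth_prob (y + D)[%classic else `[birth_prob y, +oo[%classic.

Definition path_event (m : nat) (s : bitseq) : set T :=
  \bigcap_(i in `I_(size s)) U i @^-1` jump_set (walk_end m (take i s)) (nth false s i).

Lemma measurable_path_event m s : measurable (path_event m s).
Proof.
apply: fin_bigcap_measurable; first exact: finite_II.
by move=> i _; apply: measurable_U_preimage; rewrite /jump_set; case: nth.
Qed.

Lemma lebesgue_jump_set_le y up :
  (lebesgue_measure (jump_set y up `&` @unit_interval R)
    <= (step_weight birth_prob D y up)%:E)%E.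
Proof.
rewrite /jump_set /step_weight; case: up.
  have /andP[p_gt0 _] := birth_prob_itv (y + D).
  exact/lebesgue_ray_lt_unit_le/ltW.
by have /andP[_ p_le1] := birth_prob_itv y; apply: lebesgue_ray_ge_unit_le.
Qed.

Lemma path_event_le m s : (P (path_event m s) <= (path_weight birth_prob D m s)%:E)%E.
Proof.
rewrite /path_event (U_iid.2 _ _ _) => [|i]; last by rewrite /jump_set; case: nth.
rewrite /path_weight -prodEFin; apply: lee_prod => i _.
  exact: measure_ge0.
exact: lebesgue_jump_set_le.
Qed.

Lemma coupled_sub_path_event y n w : coupled y w ->
  path_event y (mkseq (fun i => U i w < birth_prob (orbit w i y + D)) n) w.
Proof.
move=> Cw; set up := fun i => _.
have step i : if up i then orbit w i.+1 y = (orbit w i y).+1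
    else birth_prob (orbit w i y) <= U i w /\ orbit w i.+1 y = (orbit w i y).-1.
  by apply: coupled_step; rewrite -(Cw i); exact: Cw i.+1.
have walk i : walk_end y (mkseq up i) = orbit w i y.
  elim: i => [//|i IHi]; rewrite mkseqS walk_end_rcons IHi.
  by have := step i; case: (up i) => [-> | [_ ->]].
move=> i /=; rewrite size_mkseq => lt_in.
have take_up : take i (mkseq up n) = mkseq up i.
  by rewrite -map_take take_iota (minn_idPl (ltnW lt_in)).
rewrite take_up walk nth_mkseq // /jump_set.
have := step i; rewrite /up.
by case: ltP => [u_lt _ | _ [p_le _]]; rewrite /= in_itv /= ?andbT.
Qed.

Lemma coupled_null y : (0 < D)%N -> P (coupled y) = 0%E.
Proof.
move=> D_gt0.
have [beta [rho [beta_ge1 rho_ge0 rho_lt1 drift]]] := @birth_prob_drift D D_gt0.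
have p_itv x : 0 <= birth_prob x <= 1.
  by have /andP[/ltW -> ->] := birth_prob_itv x.
apply: (@geometric_domination_eq0 _ _ rho (beta ^+ y)); rewrite ?measure_ge0 ?rho_ge0 //.
move=> n.
apply: (@le_trans _ _ (\sum_(s <- bitseqs n) (path_weight birth_prob D y s)%:E)).
  apply: le_trans; last by apply: lee_sum => s _; exact: path_event_le.
  apply: (measure_sub_sum_seq _ [::]);
    [exact: measurable_path_event | exact: measurable_coupled | move=> w Cw].
  exists (mkseq (fun i => U i w < birth_prob (orbit w i y + D)) n).
    by apply: mem_bitseqs; rewrite size_mkseq.
  exact: coupled_sub_path_event.
by rewrite sumEFin lee_fin; apply: paths_weight_le => //; exact: birth_prob0.
Qed.

End BirthDeathChain.

Theorem lemma3p2 (R : realType) (g1 g2 : R) (hg1 : 0 < g1) (hg2 : 0 < g2)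
    (dsp : measure_display) (T : measurableType dsp) (P : probability T R)
    (U : nat -> T -> R) (hU : iid_uniform01 P U)
    (d : int) (hd : d != 0) (x0 y0 : nat) (hxy : I_d d (x0, y0)) :
  let E := [set w : T | forall n : nat,
              I_d d (bd_cocycle g1 g2 (fun k => U k w) n x0,
                     bd_cocycle g1 g2 (fun k => U k w) n y0)] in
  measurable E /\ P E = 0%E.
Proof.
move=> E.
have [D [y [D_gt0 ->]]] : exists D y, (0 < D)%N /\ E = coupled g1 g2 U D y.
  rewrite {}/E; move: hd hxy; rewrite /I_d /=; case: d => D hd hxy.
    exists D, y0; split; first by case: D hd {hxy}.
    have -> : x0 = (y0 + D)%N by lia.
    by apply/seteqP; split => w Ew n; have := Ew n; rewrite /I_d /=; lia.
  exists D.+1, x0; split => //.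
  have -> : y0 = (x0 + D.+1)%N by lia.
  by apply/seteqP; split => w Ew n; have := Ew n; rewrite /I_d /=; lia.
split; first exact: (measurable_coupled _ _ _ _ hU).
exact: (coupled_null _ _ hg1 hg2 _ _ hU).
Qed.
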